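(* Let $\lambda\in\mathbb C$ satisfy $\lambda^2+\lambda+1=0$ (so $\lambda^3=1$, $\lambda\neq1$), and let $G\subset\mathrm{Diff}(\mathbb C^2,0)$ be the subgroup generated by $f_1=f_2=f_3=f_4$, $f_5$, $f_6$, where, for $Z=(z_1,z_2)$, $f_1(Z)=(-z_1,\lambda z_2)$, $f_5(Z)=(-z_1+z_2^2,\lambda z_2)$, $f_6(Z)=(-z_1+\lambda^2z_2^2,\lambda z_2)$. Then $f_1\circ f_2\circ f_3\circ f_4\circ f_5\circ f_6=\mathrm{Id}$, the maps $f_1,\ldots,f_6$ are pairwise conjugate in $G$ (so $G$ is irreducible with basic set of generators $f_1,\ldots,f_6$), $G$ is infinite, and $G$ is not abelian and not analytically linearizable.
   Context: $\mathrm{Diff}(\mathbb C^2,0)$ denotes the group of germs at $0$ of holomorphic diffeomorphisms of $\mathbb C^2$ fixing $0$. A subgroup $G$ is irreducible if it admits a finite set of generators $f_1,\ldots,f_{\nu+1}$ (repetitions allowed) with $f_1\circ\cdots\circ f_{\nu+1}=\mathrm{Id}$ and such that for all $i,j$ there is $h\in G$ with $f_i\circ h=h\circ f_j$. *)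

From Stdlib Require Import Reals List.
Open Scope R_scope.

Definition Cx : Type := (R * R)%type.
Definition Czero : Cx := (0, 0).
Definition Cone : Cx := (1, 0).
Definition Cadd (z w : Cx) : Cx := (fst z + fst w, snd z + snd w).
Definition Copp (z : Cx) : Cx := (- fst z, - snd z).
Definition Csub (z w : Cx) : Cx := Cadd z (Copp w).
Definition Cmul (z w : Cx) : Cx :=
  (fst z * fst w - snd z * snd w, fst z * snd w + snd z * fst w).
Definition Cmod (z : Cx) : R := sqrt (fst z * fst z + snd z * snd z).

Definition C2 : Type := (Cx * Cx)%type.
Definition C2zero : C2 := (Czero, Czero).
Definition C2add (z w : C2) : C2 := (Cadd (fst z) (fst w), Cadd (snd z) (snd w)).
Definition C2norm (z : C2) : R := Rmax (Cmod (fst z)) (Cmod (snd z)).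

Definition Map : Type := C2 -> C2.
Definition idmap : Map := fun z => z.
Definition mcomp (f g : Map) : Map := fun z => f (g z).

Definition eqg (f g : Map) : Prop :=
  exists r, 0 < r /\ forall z, C2norm z < r -> f z = g z.

Definition C_differentiable_at (f : C2 -> Cx) (z : C2) : Prop :=
  exists a b : Cx, forall eps, 0 < eps -> exists delta, 0 < delta /\
    forall h : C2, C2norm h < delta ->
      Cmod (Csub (Csub (Csub (f (C2add z h)) (f z)) (Cmul a (fst h)))
                 (Cmul b (snd h))) <= eps * C2norm h.

Definition holomorphic_near0 (phi : Map) : Prop :=
  exists r, 0 < r /\ forall z, C2norm z < r ->
    C_differentiable_at (fun w => fst (phi w)) z /\
    C_differentiable_at (fun w => snd (phi w)) z.

(* phi is (a representative of) an element of Diff(Cx^2,0) with inverse germ psi *)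
Definition diff_germ_pair (phi psi : Map) : Prop :=
  holomorphic_near0 phi /\ holomorphic_near0 psi /\
  phi C2zero = C2zero /\ psi C2zero = C2zero /\
  eqg (mcomp phi psi) idmap /\ eqg (mcomp psi phi) idmap.

Definition linmap (a b c d : Cx) : Map :=
  fun z => (Cadd (Cmul a (fst z)) (Cmul b (snd z)),
            Cadd (Cmul c (fst z)) (Cmul d (snd z))).

(* subgroup generated by a set S of (globally invertible) maps *)
Inductive generated (S : Map -> Prop) : Map -> Prop :=
| gen_id : generated S idmap
| gen_base f : S f -> generated S f
| gen_comp f g : generated S f -> generated S g -> generated S (mcomp f g)
| gen_inv f g : generated S f -> (forall z, f (g z) = z) ->
                (forall z, g (f z) = z) -> generated S g.

Definition analytically_linearizable (G : Map -> Prop) : Prop :=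
  exists phi psi, diff_germ_pair phi psi /\
    forall g, G g -> exists a b c d, eqg (mcomp phi (mcomp g psi)) (linmap a b c d).

Definition abelian_germs (G : Map -> Prop) : Prop :=
  forall g h, G g -> G h -> eqg (mcomp g h) (mcomp h g).

Definition finite_germs (G : Map -> Prop) : Prop :=
  exists l : list Map, forall g, G g -> exists g', In g' l /\ eqg g g'.

Definition f1 (lam : Cx) : Map := fun z => (Copp (fst z), Cmul lam (snd z)).
Definition f5 (lam : Cx) : Map :=
  fun z => (Cadd (Copp (fst z)) (Cmul (snd z) (snd z)), Cmul lam (snd z)).
Definition f6 (lam : Cx) : Map :=
  fun z => (Cadd (Copp (fst z)) (Cmul (Cmul lam lam) (Cmul (snd z) (snd z))),
            Cmul lam (snd z)).

Definition fgen (lam : Cx) (i : nat) : Map :=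
  match i with 5%nat => f5 lam | 6%nat => f6 lam | _ => f1 lam end.

Definition Ggen (lam : Cx) : Map -> Prop :=
  generated (fun g => exists i, (1 <= i <= 6)%nat /\ g = fgen lam i).

From Stdlib Require Import Reals List Lra Lia FunctionalExtensionality Classical.
From Coquelicot Require Complex.
Open Scope R_scope.

(* The roots of λ² + λ + 1 = 0 are λ = -1/2 ± i√3/2, so we work with
   λ = (-1/2, b), b² = 3/4, and every identity between the generators becomes
   a polynomial identity in b that reduces modulo b² = 3/4.

   The group G contains the shears T_c(z₁, z₂) = (z₁ + c z₂², z₂): indeed
   f₆ ∘ f₁⁻¹ = T₁ and f₅ ∘ f₁⁻¹ = T_λ, and c ↦ T_c is an additive homomorphism.
   - The product relation and the conjugacies f_i ∘ T_a = T_a ∘ f_j (for a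
     suitable a in the additive group spanned by 1 and λ) are direct computations.
   - G is infinite because the shears T_n = T₁ⁿ are pairwise distinct germs.
   - G is not abelian because f₁ and f₅ do not commute.
   - G is not linearizable: T₁ is tangent to the identity to second order and is
     not the identity.  If φ ∘ T₁ ∘ φ⁻¹ were linear, the chain rule would force
     this linear map to be tangent to the identity, hence equal to it, hence
     T₁ = Id near 0.  This part is developed for arbitrary holomorphic germs
     (norm estimates on ℂ², first-order approximation at 0) before being
     specialised. *)

(* Our modulus agrees with Coquelicot's, whose triangle inequality and
   multiplicativity we reuse. *)
Lemma Cmod_Coquelicot (x : Cx) : Cmod x = Complex.Cmod x.
Proof. unfold Cmod, Complex.Cmod. f_equal. ring. Qed.

Lemma Cmod_ge0 (x : Cx) : 0 <= Cmod x.
Proof. rewrite Cmod_Coquelicot. apply Complex.Cmod_ge_0. Qed.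

Lemma Cmod_add (x y : Cx) : Cmod (Cadd x y) <= Cmod x + Cmod y.
Proof. rewrite !Cmod_Coquelicot. apply (Complex.Cmod_triangle x y). Qed.

Lemma Cmod_mul (x y : Cx) : Cmod (Cmul x y) = Cmod x * Cmod y.
Proof. rewrite !Cmod_Coquelicot. apply (Complex.Cmod_mult x y). Qed.

Lemma Cmod_sub (x y : Cx) : Cmod (Csub x y) <= Cmod x + Cmod y.
Proof.
  replace (Cmod y) with (Cmod (Copp y)) by (unfold Cmod, Copp; cbn [fst snd]; f_equal; ring).
  apply Cmod_add.
Qed.

Lemma Cmod_real (s : R) : 0 <= s -> Cmod (s, 0) = s.
Proof.
  intros Hs. unfold Cmod; cbn [fst snd].
  replace (s * s + 0 * 0) with (s * s) by ring. apply sqrt_square; exact Hs.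
Qed.

Lemma Cmod_eq0 (x : Cx) : Cmod x = 0 -> x = Czero.
Proof.
  rewrite Cmod_Coquelicot. intros H. apply Complex.Cmod_eq_0 in H.
  rewrite H. reflexivity.
Qed.

Lemma Cmod_le_sub (x y : Cx) : Cmod x <= Cmod (Csub x y) + Cmod y.
Proof.
  replace x with (Cadd (Csub x y) y) at 1 by
    (destruct x, y; unfold Csub, Cadd, Copp; cbn [fst snd]; f_equal; ring).
  apply Cmod_add.
Qed.

Lemma C2norm_fst (h : C2) : Cmod (fst h) <= C2norm h.
Proof. apply Rmax_l. Qed.

Lemma C2norm_snd (h : C2) : Cmod (snd h) <= C2norm h.
Proof. apply Rmax_r. Qed.

Lemma C2norm_ge0 (h : C2) : 0 <= C2norm h.
Proof. eapply Rle_trans; [apply Cmod_ge0 | apply C2norm_fst]. Qed.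

Lemma C2norm_lub (h : C2) (X : R) :
  Cmod (fst h) <= X -> Cmod (snd h) <= X -> C2norm h <= X.
Proof. apply Rmax_lub. Qed.

Lemma C2norm_zero : C2norm C2zero = 0.
Proof.
  unfold C2norm, C2zero, Czero; cbn [fst snd].
  rewrite Cmod_real by lra. apply Rmax_left; lra.
Qed.

(* Points on the positive real z₂-axis witness that two germs differ. *)
Definition vpoint (t : R) : C2 := (Czero, (t, 0)).

Lemma C2norm_vpoint (t : R) : 0 <= t -> C2norm (vpoint t) = t.
Proof.
  intros Ht. unfold C2norm, vpoint, Czero; cbn [fst snd].
  rewrite !Cmod_real by lra. apply Rmax_right; lra.
Qed.

Definition C2scale (s : R) (w : C2) : C2 := (Cmul (s, 0) (fst w), Cmul (s, 0) (snd w)).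

Lemma C2norm_scale (s : R) (w : C2) : 0 <= s -> C2norm (C2scale s w) = s * C2norm w.
Proof.
  intros Hs. unfold C2norm, C2scale; cbn [fst snd].
  rewrite !Cmod_mul, Cmod_real by exact Hs. apply RmaxRmult; exact Hs.
Qed.

Lemma Rmin_lt (x a b : R) : x < Rmin a b -> x < a /\ x < b.
Proof. intros H. split; eapply Rlt_le_trans; eauto; [apply Rmin_l | apply Rmin_r]. Qed.

Lemma eqg_pt (f g : Map) : (forall z, f z = g z) -> eqg f g.
Proof. intros E. exists 1; split; [lra | intros; apply E]. Qed.

Lemma eqg_sym (f g : Map) : eqg f g -> eqg g f.
Proof. intros [r [Hr E]]. exists r; split; [exact Hr|]. intros z Hz; symmetry; auto. Qed.

Lemma eqg_trans (f g h : Map) : eqg f g -> eqg g h -> eqg f h.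
Proof.
  intros [r [Hr E]] [s [Hs F]]. exists (Rmin r s); split; [apply Rmin_pos; auto|].
  intros z Hz. apply Rmin_lt in Hz as [Hzr Hzs]. rewrite E, F; auto.
Qed.

Lemma eqg_vpoint (f g : Map) : eqg f g -> exists t, 0 < t /\ f (vpoint t) = g (vpoint t).
Proof.
  intros [r [Hr E]]. exists (r / 2); split; [lra|].
  apply E. rewrite C2norm_vpoint; lra.
Qed.

Lemma distinct_germs_not_finite (l : list Map) (F : nat -> Map) :
  (forall n m, eqg (F n) (F m) -> n = m) ->
  ~ (forall n, exists g, In g l /\ eqg (F n) g).
Proof.
  revert F. induction l as [|x l IH]; intros F Finj Hcover.
  - destruct (Hcover 0%nat) as [g [[] _]].
  - destruct (classic (exists n0, eqg (F n0) x)) as [[n0 Hn0] | Hnone].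
    + (* drop the index n0, the only one that may be covered by x *)
      set (skip k := if Nat.ltb k n0 then k else S k).
      assert (Hskip : forall k, skip k <> n0)
        by (intros k; unfold skip; destruct (Nat.ltb_spec k n0); lia).
      apply (IH (fun k => F (skip k))).
      * intros k k' E. apply Finj in E. unfold skip in E.
        destruct (Nat.ltb_spec k n0), (Nat.ltb_spec k' n0); lia.
      * intros k. destruct (Hcover (skip k)) as [g [[<- | Hin] E]].
        -- exfalso. apply (Hskip k), Finj. eapply eqg_trans; [exact E | apply eqg_sym, Hn0].
        -- exists g; split; assumption.
    + apply (IH F Finj). intros n. destruct (Hcover n) as [g [[<- | Hin] E]].
      * exfalso. apply Hnone. exists n. exact E.
      * exists g; split; assumption.
Qed.

Definition shear (c : Cx) : Map :=
  fun z => (Cadd (fst z) (Cmul c (Cmul (snd z) (snd z))), snd z).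

Ltac unfold_maps_in H :=
  cbv beta iota zeta delta [mcomp idmap f1 f5 f6 fgen shear vpoint
                            Cadd Cmul Copp Csub Cone Czero fst snd] in H.

Ltac expand_maps :=
  cbv beta iota zeta delta [mcomp idmap f1 f5 f6 fgen shear vpoint
                            Cadd Cmul Copp Csub Cone Czero fst snd];
  repeat match goal with |- (_, _) = (_, _) => f_equal end.

Ltac intro_C2 := let z := fresh "z" in intro z; destruct z as [[? ?] [? ?]].

Lemma generated_ext (S : Map -> Prop) (f g : Map) :
  generated S f -> (forall z, f z = g z) -> generated S g.
Proof. intros H E. replace g with f; [exact H|]. extensionality z; apply E. Qed.

Lemma generated_shear0 (S : Map -> Prop) : generated S (shear Czero).
Proof. apply (generated_ext _ idmap); [apply gen_id | intro_C2; expand_maps; ring]. Qed.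

Lemma generated_shear_add (S : Map -> Prop) (c d : Cx) :
  generated S (shear c) -> generated S (shear d) -> generated S (shear (Cadd c d)).
Proof.
  intros Hc Hd. apply (generated_ext _ _ _ (gen_comp _ _ _ Hc Hd)).
  destruct c, d; intro_C2; expand_maps; ring.
Qed.

Lemma generated_shear_opp (S : Map -> Prop) (c : Cx) :
  generated S (shear c) -> generated S (shear (Copp c)).
Proof. intros Hc. apply (gen_inv _ _ _ Hc); destruct c; intro_C2; expand_maps; ring. Qed.

Definition cube_root (b : R) : Cx := (-1/2, b).

Lemma cube_root_form (lam : Cx) :
  Cadd (Cadd (Cmul lam lam) lam) Cone = Czero ->
  exists b, b * b = 3/4 /\ lam = cube_root b.
Proof.
  destruct lam as [a b]. unfold Cadd, Cmul, Cone, Czero; cbn [fst snd].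
  intros E. injection E as Hre Him.
  assert (Hb : b <> 0) by (intros ->; nra).
  assert (Ha : a = -1/2).
  { assert (Hab : b * (2 * a + 1) = 0) by lra.
    apply Rmult_integral in Hab as [Hb0 | Ha']; [contradiction | lra]. }
  subst a. exists b. split; [lra | reflexivity].
Qed.

Lemma pow_reduce (b : R) (hb : b * b = 3/4) (n : nat) : b ^ (S (S n)) = 3/4 * b ^ n.
Proof. cbn [pow]. rewrite <- Rmult_assoc, hb. reflexivity. Qed.

Ltac reduce_mod hb := ring_simplify; repeat rewrite (pow_reduce _ hb); field.

(* f₁⁻¹ (for λ³ = 1). *)
Definition f1inv (lam : Cx) : Map := fun z => (Copp (fst z), Cmul (Cmul lam lam) (snd z)).

(* Writing f_i = T_{κ_i} ∘ f₁ (κ = 0, 0, 0, 0, λ, 1), one checks that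
   f_i ∘ T_a = T_a ∘ f_j for a = λ(κ_j − κ_i) = s_i − s_j, where s_i = −λκ_i. *)
Definition conj_shift (lam : Cx) (i : nat) : Cx :=
  match i with 5%nat => Copp (Cmul lam lam) | 6%nat => Copp lam | _ => Czero end.

Section CubeRoot.
Variable b : R.
Hypothesis hb : b * b = 3/4.
Let lam := cube_root b.
Let G := Ggen lam.

Ltac check_identity := unfold lam, f1inv, conj_shift, cube_root; expand_maps; reduce_mod hb.

Lemma product_relation :
  eqg (mcomp (fgen lam 1%nat) (mcomp (fgen lam 2%nat) (mcomp (fgen lam 3%nat)
        (mcomp (fgen lam 4%nat) (mcomp (fgen lam 5%nat) (fgen lam 6%nat)))))) idmap.
Proof. apply eqg_pt; intro_C2; check_identity. Qed.

Lemma G_fgen (i : nat) : (1 <= i <= 6)%nat -> G (fgen lam i).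
Proof. intros Hi. apply gen_base. exists i; split; [exact Hi | reflexivity]. Qed.

Lemma G_f1inv : G (f1inv lam).
Proof. apply (gen_inv _ (fgen lam 1)); [apply G_fgen; lia | |]; intro_C2; check_identity. Qed.

Lemma G_shear_one : G (shear Cone).
Proof.
  apply (generated_ext _ _ _ (gen_comp _ _ _ (G_fgen 6 ltac:(lia)) G_f1inv)).
  intro_C2; check_identity.
Qed.

Lemma G_shear_lam : G (shear lam).
Proof.
  apply (generated_ext _ _ _ (gen_comp _ _ _ (G_fgen 5 ltac:(lia)) G_f1inv)).
  intro_C2; check_identity.
Qed.

Lemma G_conj_shift (i : nat) : G (shear (conj_shift lam i)).
Proof.
  destruct i as [|[|[|[|[|[|[|i]]]]]]]; try apply generated_shear0.
  - (* -λ² = 1 + λ *)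
    apply (generated_ext _ _ _ (generated_shear_add _ _ _ G_shear_one G_shear_lam)).
    intro_C2; check_identity.
  - apply generated_shear_opp, G_shear_lam.
Qed.

Lemma generators_conjugate (i j : nat) : (1 <= i <= 6)%nat -> (1 <= j <= 6)%nat ->
  exists h, G h /\ eqg (mcomp (fgen lam i) h) (mcomp h (fgen lam j)).
Proof.
  intros Hi Hj. exists (shear (Cadd (conj_shift lam i) (Copp (conj_shift lam j)))). split.
  - apply generated_shear_add; [| apply generated_shear_opp]; apply G_conj_shift.
  - apply eqg_pt.
    destruct i as [|[|[|[|[|[|[|i]]]]]]]; try lia;
    destruct j as [|[|[|[|[|[|[|j]]]]]]]; try lia; intro_C2; check_identity.
Qed.

Lemma G_shear_nat (n : nat) : G (shear (INR n, 0)).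
Proof.
  induction n as [|n IH].
  - apply generated_shear0.
  - apply (generated_ext _ _ _ (generated_shear_add _ _ _ G_shear_one IH)).
    rewrite S_INR. intro_C2; expand_maps; ring.
Qed.

Lemma shear_nat_distinct (n m : nat) : eqg (shear (INR n, 0)) (shear (INR m, 0)) -> n = m.
Proof.
  intros E. destruct (eqg_vpoint _ _ E) as [t [Ht Et]].
  apply (f_equal (fun p => fst (fst p))) in Et. unfold_maps_in Et.
  apply INR_eq, Rmult_eq_reg_r with (t * t); nra.
Qed.

Lemma G_infinite : ~ finite_germs G.
Proof.
  intros [l Hl]. apply (distinct_germs_not_finite l _ shear_nat_distinct).
  intros n. apply Hl, G_shear_nat.
Qed.

(* f₁ ∘ f₅ and f₅ ∘ f₁ differ at every point (0, t), t > 0. *)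
Lemma G_not_abelian : ~ abelian_germs G.
Proof.
  intros Hab.
  destruct (eqg_vpoint _ _ (Hab _ _ (G_fgen 1 ltac:(lia)) (G_fgen 5 ltac:(lia))))
    as [t [Ht Et]].
  apply (f_equal (fun p => fst (fst p))) in Et. unfold lam, cube_root in Et. unfold_maps_in Et.
  nra.
Qed.

End CubeRoot.

Definition approx_err (f : C2 -> Cx) (a b : Cx) (h : C2) : Cx :=
  Csub (Csub (f h) (Cmul a (fst h))) (Cmul b (snd h)).

Definition lin_approx0 (f : C2 -> Cx) (a b : Cx) : Prop :=
  forall eps, 0 < eps -> exists delta, 0 < delta /\ forall h, C2norm h < delta ->
    Cmod (approx_err f a b h) <= eps * C2norm h.

Lemma holomorphic_lin_approx0 (F : Map) :
  holomorphic_near0 F -> F C2zero = C2zero ->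
  (exists a b, lin_approx0 (fun h => fst (F h)) a b) /\
  (exists a b, lin_approx0 (fun h => snd (F h)) a b).
Proof.
  intros [r [Hr HF]] H0.
  assert (Hzero : forall h, C2add C2zero h = h)
    by (intros [[? ?] [? ?]]; unfold C2add, C2zero, Cadd, Czero; cbn [fst snd];
        rewrite !Rplus_0_l; reflexivity).
  assert (Hsub0 : forall x, Csub x Czero = x)
    by (intros [? ?]; unfold Csub, Cadd, Copp, Czero; cbn [fst snd]; f_equal; ring).
  destruct (HF C2zero ltac:(rewrite C2norm_zero; exact Hr)) as [[a1 [b1 D1]] [a2 [b2 D2]]].
  rewrite H0 in D1, D2. cbn [fst snd C2zero] in D1, D2.
  split; [exists a1, b1 | exists a2, b2]; intros eps Heps;
    [destruct (D1 eps Heps) as [d [Hd E]] | destruct (D2 eps Heps) as [d [Hd E]]];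
    exists d; split; auto; intros h Hh; specialize (E h Hh);
    rewrite Hzero, Hsub0 in E; exact E.
Qed.

Lemma lin_approx0_bound (f : C2 -> Cx) (a b : Cx) :
  lin_approx0 f a b ->
  exists K delta, 0 < K /\ 0 < delta /\
    forall h, C2norm h < delta -> Cmod (f h) <= K * C2norm h.
Proof.
  intros A. destruct (A 1 Rlt_0_1) as [d [Hd E]].
  exists (1 + Cmod a + Cmod b), d.
  pose proof (Cmod_ge0 a); pose proof (Cmod_ge0 b).
  split; [lra | split; [exact Hd|]].
  intros h Hh. specialize (E h Hh). unfold approx_err in E.
  pose proof (C2norm_fst h); pose proof (C2norm_snd h); pose proof (C2norm_ge0 h).
  pose proof (Cmod_ge0 (fst h)); pose proof (Cmod_ge0 (snd h)).
  pose proof (Cmod_le_sub (f h) (Cmul a (fst h))) as S1.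
  pose proof (Cmod_le_sub (Csub (f h) (Cmul a (fst h))) (Cmul b (snd h))) as S2.
  rewrite Cmod_mul in S1, S2. nra.
Qed.

Lemma holomorphic_bound (F : Map) :
  holomorphic_near0 F -> F C2zero = C2zero ->
  exists K delta, 0 < K /\ 0 < delta /\
    forall h, C2norm h < delta -> C2norm (F h) <= K * C2norm h.
Proof.
  intros HF H0.
  destruct (holomorphic_lin_approx0 F HF H0) as [[a1 [b1 A1]] [a2 [b2 A2]]].
  destruct (lin_approx0_bound _ _ _ A1) as [K1 [d1 [HK1 [Hd1 B1]]]].
  destruct (lin_approx0_bound _ _ _ A2) as [K2 [d2 [HK2 [Hd2 B2]]]].
  exists (K1 + K2), (Rmin d1 d2). split; [lra | split; [apply Rmin_pos; auto|]].
  intros h Hh. apply Rmin_lt in Hh as [Hh1 Hh2].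
  pose proof (C2norm_ge0 h). specialize (B1 h Hh1). specialize (B2 h Hh2).
  apply C2norm_lub; nra.
Qed.

Definition quad_tangent (g : Map) (C r : R) : Prop :=
  0 <= C /\ 0 < r /\ forall u, C2norm u < r ->
    Cmod (Csub (fst (g u)) (fst u)) <= C * (C2norm u * C2norm u) /\
    Cmod (Csub (snd (g u)) (snd u)) <= C * (C2norm u * C2norm u).

Lemma quad_tangent_bound (g : Map) (C r : R) (u : C2) :
  quad_tangent g C r -> C2norm u < r -> C * C2norm u <= 1 -> C2norm (g u) <= 2 * C2norm u.
Proof.
  intros [HC [Hr Q]] Hu HCu. destruct (Q u Hu) as [Q1 Q2].
  pose proof (C2norm_fst u); pose proof (C2norm_snd u); pose proof (C2norm_ge0 u).
  pose proof (Cmod_le_sub (fst (g u)) (fst u)); pose proof (Cmod_le_sub (snd (g u)) (snd u)).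
  apply C2norm_lub; nra.
Qed.

(* f(v) − f(u) = [error at v] − [error at u] + a(v₁ − u₁) + b(v₂ − u₂), hence
   |f(v) − f(u)| is bounded by the two errors and the displacement v − u. *)
Lemma approx_difference_bound (f : C2 -> Cx) (a b : Cx) (v u : C2) (e1 e2 q : R) :
  Cmod (approx_err f a b v) <= e1 -> Cmod (approx_err f a b u) <= e2 ->
  Cmod (Csub (fst v) (fst u)) <= q -> Cmod (Csub (snd v) (snd u)) <= q ->
  Cmod (Csub (f v) (f u)) <= e1 + e2 + (Cmod a + Cmod b) * q.
Proof.
  intros Ev Eu D1 D2.
  set (lin := Cadd (Cmul a (Csub (fst v) (fst u))) (Cmul b (Csub (snd v) (snd u)))).
  assert (Split : Csub (f v) (f u) = Cadd (Csub (approx_err f a b v) (approx_err f a b u)) lin).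
  { unfold lin, approx_err. destruct (f v), (f u), a, b, v as [[? ?] [? ?]], u as [[? ?] [? ?]].
    unfold Csub, Cadd, Copp, Cmul; cbn [fst snd]. f_equal; ring. }
  rewrite Split.
  pose proof (Cmod_add (Csub (approx_err f a b v) (approx_err f a b u)) lin).
  pose proof (Cmod_sub (approx_err f a b v) (approx_err f a b u)).
  pose proof (Cmod_add (Cmul a (Csub (fst v) (fst u))) (Cmul b (Csub (snd v) (snd u)))).
  rewrite !Cmod_mul in *.
  pose proof (Rmult_le_compat_l _ _ _ (Cmod_ge0 a) D1).
  pose proof (Rmult_le_compat_l _ _ _ (Cmod_ge0 b) D2).
  unfold lin in *. lra.
Qed.

Lemma lin_approx0_quad_perturb (f : C2 -> Cx) (a b : Cx) (g : Map) (C r : R) :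
  lin_approx0 f a b -> quad_tangent g C r ->
  forall ep, 0 < ep -> exists delta, 0 < delta /\ forall u, C2norm u < delta ->
    Cmod (Csub (f (g u)) (f u)) <= ep * C2norm u.
Proof.
  intros A Qg ep Hep. pose proof Qg as [HC [Hr Q]].
  set (M := Cmod a + Cmod b).
  assert (HM : 0 <= M) by (pose proof (Cmod_ge0 a); pose proof (Cmod_ge0 b); unfold M; lra).
  destruct (A (ep / 6) ltac:(lra)) as [d [Hd E]].
  exists (Rmin r (Rmin (d / 2) (Rmin (1 / (C + 1)) (ep / (2 * (M * C + 1)))))).
  split; [repeat apply Rmin_pos; try apply Rdiv_lt_0_compat; nra|].
  intros u Hu.
  apply Rmin_lt in Hu as [Hur Hu]. apply Rmin_lt in Hu as [Hud Hu].
  apply Rmin_lt in Hu as [HuC HuM].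
  set (n := C2norm u). pose proof (C2norm_ge0 u) as Hn. fold n in Hn, Hud, HuC, HuM.
  assert (HCn : C * n <= 1).
  { apply Rmult_lt_compat_l with (r := C + 1) in HuC; [|lra].
    replace ((C + 1) * (1 / (C + 1))) with 1 in HuC by (field; lra). nra. }
  assert (HMCn : M * C * n <= ep / 2).
  { apply Rmult_lt_compat_l with (r := 2 * (M * C + 1)) in HuM; [|nra].
    replace (2 * (M * C + 1) * (ep / (2 * (M * C + 1)))) with ep in HuM by (field; nra).
    nra. }
  assert (Hgu : C2norm (g u) <= 2 * n) by (apply (quad_tangent_bound g C r); auto).
  pose proof (C2norm_ge0 (g u)).
  destruct (Q u Hur) as [Q1 Q2].
  pose proof (approx_difference_bound f a b (g u) u _ _ _
                (E (g u) ltac:(lra)) (E u ltac:(fold n; lra)) Q1 Q2) as Bound.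
  fold n M in Bound.
  (* ε/6 · 2n + ε/6 · n + M C n² ≤ ε/2 · n + ε/2 · n *)
  assert (M * (C * (n * n)) <= ep / 2 * n)
    by (replace (M * (C * (n * n))) with (M * C * n * n) by ring;
        apply Rmult_le_compat_r; lra).
  nra.
Qed.

Definition tangent_to_id (F : Map) : Prop :=
  forall ep, 0 < ep -> exists rho, 0 < rho /\ forall w, C2norm w < rho ->
    Cmod (Csub (fst (F w)) (fst w)) <= ep * C2norm w /\
    Cmod (Csub (snd (F w)) (snd w)) <= ep * C2norm w.

Lemma tangent_to_id_eqg (F F' : Map) : eqg F F' -> tangent_to_id F -> tangent_to_id F'.
Proof.
  intros [r [Hr E]] T ep Hep. destruct (T ep Hep) as [rho [Hrho HT]].
  exists (Rmin r rho). split; [apply Rmin_pos; auto|].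
  intros w Hw. apply Rmin_lt in Hw as [Hwr Hwrho]. rewrite <- (E w Hwr). auto.
Qed.

(* Chain rule: conjugating a map quadratically tangent to the identity by a
   holomorphic germ gives a map tangent to the identity. *)
Lemma conj_tangent_to_id (phi psi g : Map) (C r : R) :
  diff_germ_pair phi psi -> quad_tangent g C r -> tangent_to_id (mcomp phi (mcomp g psi)).
Proof.
  intros [Hphi [Hpsi [H0phi [H0psi [[r1 [Hr1 Inv]] _]]]]] Qg ep Hep.
  destruct (holomorphic_bound psi Hpsi H0psi) as [K [dpsi [HK [Hdpsi Bpsi]]]].
  destruct (holomorphic_lin_approx0 phi Hphi H0phi) as [[a1 [b1 A1]] [a2 [b2 A2]]].
  destruct (lin_approx0_quad_perturb _ _ _ g C r A1 Qg (ep / K) ltac:(apply Rdiv_lt_0_compat; lra))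
    as [d1 [Hd1 P1]].
  destruct (lin_approx0_quad_perturb _ _ _ g C r A2 Qg (ep / K) ltac:(apply Rdiv_lt_0_compat; lra))
    as [d2 [Hd2 P2]].
  exists (Rmin r1 (Rmin dpsi (Rmin (d1 / K) (d2 / K)))).
  split; [repeat apply Rmin_pos; try apply Rdiv_lt_0_compat; lra|].
  intros w Hw. apply Rmin_lt in Hw as [Hw1 Hw]. apply Rmin_lt in Hw as [Hwpsi Hw].
  apply Rmin_lt in Hw as [Hwd1 Hwd2].
  pose proof (C2norm_ge0 w).
  set (u := psi w).
  assert (Hu : C2norm u <= K * C2norm w) by (apply Bpsi; exact Hwpsi).
  assert (HuK : ep / K * C2norm u <= ep * C2norm w).
  { replace (ep * C2norm w) with (ep / K * (K * C2norm w)) by (field; lra).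
    apply Rmult_le_compat_l; [apply Rlt_le, Rdiv_lt_0_compat|]; lra. }
  assert (Hud : forall d, C2norm w < d / K -> C2norm u < d).
  { intros d Hwd. apply Rmult_lt_compat_l with (r := K) in Hwd; [|lra].
    replace (K * (d / K)) with d in Hwd by (field; lra). lra. }
  (* w = φ(ψ(w)) = φ(u) *)
  assert (Hw_u : phi u = w) by (apply (Inv w Hw1)).
  pose proof (P1 u (Hud d1 Hwd1)) as E1. pose proof (P2 u (Hud d2 Hwd2)) as E2.
  rewrite Hw_u in E1, E2.
  split; eapply Rle_trans; eassumption.
Qed.

Lemma shrink_lt (x N : R) : 0 < x -> 0 <= N -> x / (2 * (N + 1)) * N < x.
Proof.
  intros Hx HN.
  replace (x / (2 * (N + 1)) * N) with (x * (N / (2 * (N + 1)))) by (field; lra).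
  assert (N / (2 * (N + 1)) < 1).
  { apply Rmult_lt_reg_r with (2 * (N + 1)); [lra|].
    replace (N / (2 * (N + 1)) * (2 * (N + 1))) with N by (field; lra). lra. }
  nra.
Qed.

Lemma le_all_eps_zero (X N : R) :
  0 <= X -> 0 <= N -> (forall ep, 0 < ep -> X <= ep * N) -> X = 0.
Proof.
  intros HX HN H. destruct (Rle_lt_or_eq_dec 0 X HX) as [Hpos | <-]; [|reflexivity].
  exfalso. specialize (H (X / (2 * (N + 1))) ltac:(apply Rdiv_lt_0_compat; lra)).
  pose proof (shrink_lt X N Hpos HN). lra.
Qed.

(* A linear map tangent to the identity is the identity (by homogeneity). *)
Lemma linmap_tangent_to_id (a b c d : Cx) :
  tangent_to_id (linmap a b c d) -> forall w, linmap a b c d w = w.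
Proof.
  intros T w0. set (L := linmap a b c d) in *. set (N := C2norm w0).
  pose proof (C2norm_ge0 w0) as HN. fold N in HN.
  assert (Small : forall ep, 0 < ep ->
    Cmod (Csub (fst (L w0)) (fst w0)) <= ep * N /\
    Cmod (Csub (snd (L w0)) (snd w0)) <= ep * N).
  { intros ep Hep. destruct (T ep Hep) as [rho [Hrho HT]].
    set (s := rho / (2 * (N + 1))).
    assert (Hs : 0 < s) by (apply Rdiv_lt_0_compat; lra).
    pose proof (shrink_lt rho N Hrho HN) as HsN. fold s in HsN.
    destruct (HT (C2scale s w0)) as [T1 T2]; [rewrite C2norm_scale by lra; fold N; lra|].
    rewrite C2norm_scale in T1, T2 by lra. fold N in T1, T2.
    assert (Hom1 : Csub (fst (L (C2scale s w0))) (fst (C2scale s w0)) =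
                   Cmul (s, 0) (Csub (fst (L w0)) (fst w0))).
    { unfold L, linmap, C2scale. destruct w0 as [[? ?] [? ?]], a, b, c, d.
      unfold Csub, Cadd, Copp, Cmul; cbn [fst snd]. f_equal; ring. }
    assert (Hom2 : Csub (snd (L (C2scale s w0))) (snd (C2scale s w0)) =
                   Cmul (s, 0) (Csub (snd (L w0)) (snd w0))).
    { unfold L, linmap, C2scale. destruct w0 as [[? ?] [? ?]], a, b, c, d.
      unfold Csub, Cadd, Copp, Cmul; cbn [fst snd]. f_equal; ring. }
    rewrite Hom1, Cmod_mul, Cmod_real in T1 by lra.
    rewrite Hom2, Cmod_mul, Cmod_real in T2 by lra.
    split; apply Rmult_le_reg_l with s; nra. }
  assert (Z1 : Csub (fst (L w0)) (fst w0) = Czero).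
  { apply Cmod_eq0, (le_all_eps_zero _ N (Cmod_ge0 _) HN). intros ep Hep; apply Small, Hep. }
  assert (Z2 : Csub (snd (L w0)) (snd w0) = Czero).
  { apply Cmod_eq0, (le_all_eps_zero _ N (Cmod_ge0 _) HN). intros ep Hep; apply Small, Hep. }
  destruct (L w0) as [[p1 p2] [q1 q2]], w0 as [[x1 x2] [y1 y2]].
  unfold Csub, Cadd, Copp, Czero in Z1, Z2; cbn [fst snd] in Z1, Z2.
  injection Z1 as Z11 Z12. injection Z2 as Z21 Z22. f_equal; f_equal; lra.
Qed.

Lemma conj_identity (phi psi g : Map) (C r : R) :
  diff_germ_pair phi psi -> quad_tangent g C r ->
  eqg (mcomp phi (mcomp g psi)) idmap -> eqg g idmap.
Proof.
  intros [Hphi [_ [H0phi [_ [_ [r2 [Hr2 Inv]]]]]]] Qg [r3 [Hr3 Conj]].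
  pose proof Qg as [HC [Hr _]].
  destruct (holomorphic_bound phi Hphi H0phi) as [K [dphi [HK [Hdphi Bphi]]]].
  exists (Rmin r (Rmin dphi (Rmin (1 / (C + 1)) (Rmin (r2 / 2) (r3 / K))))).
  split; [repeat apply Rmin_pos; try apply Rdiv_lt_0_compat; lra|].
  intros z Hz. apply Rmin_lt in Hz as [Hzr Hz]. apply Rmin_lt in Hz as [Hzphi Hz].
  apply Rmin_lt in Hz as [HzC Hz]. apply Rmin_lt in Hz as [Hz2 Hz3].
  pose proof (C2norm_ge0 z).
  assert (HCz : C * C2norm z <= 1).
  { apply Rmult_lt_compat_l with (r := C + 1) in HzC; [|lra].
    replace ((C + 1) * (1 / (C + 1))) with 1 in HzC by (field; lra). nra. }
  assert (Hgz : C2norm (g z) < r2) by (pose proof (quad_tangent_bound g C r z Qg Hzr HCz); lra).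
  assert (Hphiz : C2norm (phi z) < r3).
  { pose proof (Bphi z Hzphi). apply Rmult_lt_compat_l with (r := K) in Hz3; [|lra].
    replace (K * (r3 / K)) with r3 in Hz3 by (field; lra). lra. }
  (* z = ψ(φ(z)) and g(z) = ψ(φ(g(ψ(φ(z))))) = ψ(φ(z)) = z *)
  assert (Ez : psi (phi z) = z) by (apply (Inv z); lra).
  assert (Egz : psi (phi (g z)) = g z) by (apply (Inv (g z)); exact Hgz).
  pose proof (Conj (phi z) Hphiz) as Cz. unfold mcomp, idmap in Cz. rewrite Ez in Cz.
  unfold idmap. rewrite <- Egz, Cz. exact Ez.
Qed.

Lemma not_linearizable (G : Map -> Prop) (g : Map) (C r : R) :
  G g -> quad_tangent g C r -> ~ eqg g idmap -> ~ analytically_linearizable G.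
Proof.
  intros Hg Qg Hne [phi [psi [P Lin]]]. destruct (Lin g Hg) as [a [b [c [d E]]]].
  apply Hne, (conj_identity phi psi g C r P Qg).
  apply (eqg_trans _ (linmap a b c d) _ E), eqg_pt, linmap_tangent_to_id.
  exact (tangent_to_id_eqg _ _ E (conj_tangent_to_id phi psi g C r P Qg)).
Qed.

Lemma shear_one_quad_tangent : quad_tangent (shear Cone) 1 1.
Proof.
  split; [lra | split; [lra|]]. intros u _.
  pose proof (C2norm_snd u); pose proof (Cmod_ge0 (snd u)).
  replace (Csub (fst (shear Cone u)) (fst u)) with (Cmul (snd u) (snd u))
    by (destruct u as [[? ?] [? ?]]; expand_maps; ring).
  replace (Csub (snd (shear Cone u)) (snd u)) with Czero
    by (destruct u as [[? ?] [? ?]]; expand_maps; ring).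
  rewrite Cmod_mul. unfold Czero. rewrite Cmod_real by lra. split; nra.
Qed.

Lemma shear_one_not_id : ~ eqg (shear Cone) idmap.
Proof.
  intros E. destruct (eqg_vpoint _ _ E) as [t [Ht Et]].
  apply (f_equal (fun p => fst (fst p))) in Et. unfold_maps_in Et. nra.
Qed.

Theorem mainTheorem7 (lam : Cx) (hlam : Cadd (Cadd (Cmul lam lam) lam) Cone = Czero) :
  eqg (mcomp (fgen lam 1%nat) (mcomp (fgen lam 2%nat) (mcomp (fgen lam 3%nat)
        (mcomp (fgen lam 4%nat) (mcomp (fgen lam 5%nat) (fgen lam 6%nat)))))) idmap /\
  (forall i j : nat, (1 <= i <= 6)%nat -> (1 <= j <= 6)%nat ->
     exists h, Ggen lam h /\ eqg (mcomp (fgen lam i) h) (mcomp h (fgen lam j))) /\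
  ~ finite_germs (Ggen lam) /\
  ~ abelian_germs (Ggen lam) /\
  ~ analytically_linearizable (Ggen lam).
Proof.
  destruct (cube_root_form lam hlam) as [b [hb ->]].
  split; [exact (product_relation b hb)|].
  split; [exact (generators_conjugate b hb)|].
  split; [exact (G_infinite b hb)|].
  split; [exact (G_not_abelian b hb)|].
  exact (not_linearizable _ _ 1 1 (G_shear_one b hb) shear_one_quad_tangent shear_one_not_id).
Qed.
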